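(* For $n\ge0$ let $Q_n^L(x)=\sum_{r=0}^{n}\left[\binom{n}{r}\sum_{\ell=0}^{r}\binom{r}{\ell}\frac{1}{\ell!}\right](-x)^r$ be the coefficient polynomials of the linear transformation $x^n\mapsto L_n(x)$. Then, as formal power series in $w$, $$\frac{\exp\left(-\frac{wx}{w(x-1)+1}\right)}{w(x-1)+1}=\sum_{n=0}^\infty Q_n^L(x)w^n.$$
   Context: $L_n(x)=\sum_{k=0}^n\binom{n}{k}\frac{(-x)^k}{k!}$ is the $n$th Laguerre polynomial; coefficient polynomials $Q_k$ of a linear operator $T$ on $\mathbb{C}[x]$ are defined by the unique representation $T=\sum_k\frac{Q_k(x)}{k!}D^k$, $D=d/dx$. *)

(* Formal power series in w with coefficients in C[x],
   modelled as coefficient functions nat -> {poly R}, R a numFieldType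
   (any characteristic-0 number field, e.g. algC). *)
From HB Require Import structures.
From mathcomp Require Import all_boot all_order all_algebra.
Set Implicit Arguments. Unset Strict Implicit. Unset Printing Implicit Defensive.
Import Order.TTheory GRing.Theory Num.Theory.
Local Open Scope ring_scope.

Section FPS.
Variable R : numFieldType.
Local Notation A := {poly R}.

Definition fps := nat -> A.

Definition fps_C (a : A) : fps := fun n => if n == 0%N then a else 0.
Definition fps_X : fps := fun n => if n == 1%N then 1 else 0.
Definition fps_add (f g : fps) : fps := fun n => f n + g n.
Definition fps_opp (f : fps) : fps := fun n => - f n.
Definition fps_mul (f g : fps) : fps :=
  fun n => \sum_(i < n.+1) f i * g (n - i)%N.
Definition fps_pow (f : fps) (k : nat) : fps := iter k (fps_mul f) (fps_C 1).

(* multiplicative inverse (when the constant term f 0 is a unit):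
   g 0 = (f 0)^-1,  g m = -(f 0)^-1 * \sum_(1 <= i <= m) f i * g (m - i) *)
Fixpoint fps_inv_seq (f : fps) (n : nat) : seq A :=
  match n with
  | 0 => [:: (f 0%N)^-1]
  | n'.+1 => let s := fps_inv_seq f n' in
      rcons s (- (f 0%N)^-1 * \sum_(i < n'.+1) f i.+1 * nth 0 s (n' - i)%N)
  end.
Definition fps_inv (f : fps) : fps := fun n => nth 0 (fps_inv_seq f n) n.

(* exponential of a series with zero constant term:
   exp s = \sum_k s^k / k!, the sum being finite in each coefficient *)
Definition fps_exp (s : fps) : fps :=
  fun n => \sum_(k < n.+1) ((k`!)%:R^-1 : R) *: fps_pow s k n.

End FPS.

Definition QL (R : numFieldType) (n : nat) : {poly R} :=
  \sum_(r < n.+1)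
     (('C(n, r))%:R * \sum_(l < r.+1) ('C(r, l))%:R / (l`!)%:R) *: (- 'X) ^+ r.

Definition denomL (R : numFieldType) : fps R :=
  fps_add (fps_C 1) (fps_mul (fps_X R) (fps_C ('X - 1))).

Definition genL (R : numFieldType) : fps R :=
  fps_mul
    (fps_exp (fps_opp (fps_mul (fps_mul (fps_X R) (fps_C 'X)) (fps_inv (denomL R)))))
    (fps_inv (denomL R)).

From mathcomp Require Import all_boot all_order all_algebra.
From mathcomp Require Import zify ring.
Set Implicit Arguments.
Unset Strict Implicit.
Unset Printing Implicit Defensive.
Import GRing.Theory Num.Theory.
Local Open Scope ring_scope.

(* Write a := 1 - x, so that the denominator is D = 1 - a w and 1/D = \sum_m a^m w^m.
   Then [w^n] exp(-x w/D)/D = \sum_k (-x)^k/k! [w^(n-k)] D^-(k+1), and by the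
   hockey-stick identity [w^m] D^-(k+1) = C(m+k, k) a^m, so the coefficient is
   \sum_k C(n,k) (-x)^k (1-x)^(n-k) / k!.  Expanding (1-x)^(n-k) by the binomial
   theorem and regrouping with C(n,k) C(n-k,r-k) = C(n,r) C(r,k) gives Q_n^L.
   The series identities are proved on truncations: the first N coefficients of a
   series in w form a polynomial in the outer variable of {poly {poly R}}, and
   truncation commutes with sums and products modulo w^N. *)

Lemma bin_trinomial (n r k : nat) : (k <= r)%N ->
  ('C(n, r) * 'C(r, k) = 'C(n, k) * 'C(n - k, r - k))%N.
Proof.
move=> le_kr; have [lt_nr | le_rn] := ltnP n r.
  rewrite bin_small // mul0n; have [lt_nk | le_kn] := ltnP n k.
    by rewrite (bin_small lt_nk).
  by rewrite [X in (_ * X)%N]bin_small ?muln0 //; lia.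
have fact_gt0 : (0 < k`! * (r - k)`! * (n - r)`!)%N by rewrite !muln_gt0 !fact_gt0.
apply/eqP; rewrite -(eqn_pmul2r fact_gt0); apply/eqP.
transitivity ('C(n, r) * ('C(r, k) * (k`! * (r - k)`!)) * (n - r)`!)%N; first by ring.
rewrite bin_fact // -mulnA bin_fact //.
have -> : (n - r = (n - k) - (r - k))%N by lia.
transitivity ('C(n, k) * (k`! * ('C(n - k, r - k) * ((r - k)`! * (n - k - (r - k))`!))))%N;
  last by ring.
by rewrite bin_fact ?bin_fact //; lia.
Qed.

Lemma sum_bin_hockey_stick (m k : nat) :
  (\sum_(i < m.+1) 'C(i + k, k) = 'C(m + k.+1, k.+1))%N.
Proof.
elim: m => [|m IH]; first by rewrite big_ord1 add0n !binn.
by rewrite big_ord_recr /= IH !addSn binS addnS.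
Qed.

Lemma sum_triangle (V : nmodType) (n : nat) (F : nat -> nat -> V) :
  \sum_(k < n.+1) \sum_(j < (n - k).+1) F k j =
  \sum_(r < n.+1) \sum_(k < r.+1) F k (r - k)%N.
Proof.
under [RHS]eq_bigr => r _ do rewrite (big_ord_widen n.+1 (fun k => F k (r - k)%N)) //.
rewrite (exchange_big_dep predT) //=; apply: eq_bigr => k _.
transitivity (\sum_(k <= i < n.+1) F k (i - k)%N); last first.
  by rewrite big_geq_mkord; apply: eq_bigl => i.
have := @big_addn V 0 +%R 0 n.+1 k xpredT (fun i => F k (i - k)%N).
rewrite add0n => ->.
have le_kn : (k <= n)%N := ltn_ord k.
rewrite (subSn le_kn) big_mkord.
by apply: eq_bigr => j _; rewrite addnK.
Qed.

Section EqModXn.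
Variables (A : nzRingType) (N : nat).

Definition eq_modXn (p q : {poly A}) := forall i, (i < N)%N -> p`_i = q`_i.

Lemma eq_modXn_trans p q r : eq_modXn p q -> eq_modXn q r -> eq_modXn p r.
Proof. by move=> epq eqr i ltiN; rewrite epq ?eqr. Qed.

Lemma eq_modXnN p q : eq_modXn p q -> eq_modXn (- p) (- q).
Proof. by move=> epq i ltiN; rewrite !coefN epq. Qed.

Lemma eq_modXnM p p' q q' : eq_modXn p p' -> eq_modXn q q' -> eq_modXn (p * q) (p' * q').
Proof.
move=> epp eqq i ltiN; rewrite !coefM; apply: eq_bigr => j _.
have lejN : (j < N)%N by apply: leq_ltn_trans ltiN; rewrite -ltnS.
by rewrite epp ?eqq //; apply: leq_ltn_trans (leq_subr _ _) ltiN.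
Qed.

Lemma eq_modXnX p q k : eq_modXn p q -> eq_modXn (p ^+ k) (q ^+ k).
Proof.
move=> epq; elim: k => [|k IHk]; first by move=> i _; rewrite !expr0.
by rewrite !exprS; apply: eq_modXnM.
Qed.

End EqModXn.

Section Truncation.
Variables (R : numFieldType) (N : nat).
Local Notation eqN := (eq_modXn N).

Definition trunc (f : fps R) : {poly {poly R}} := \poly_(i < N) f i.

Lemma coef_trunc f i : (i < N)%N -> (trunc f)`_i = f i.
Proof. by move=> ltiN; rewrite coef_poly ltiN. Qed.

Lemma trunc_C c : eqN (trunc (fps_C c)) c%:P.
Proof. by move=> i ltiN; rewrite coef_trunc // coefC. Qed.

Lemma trunc_X : eqN (trunc (fps_X R)) 'X.
Proof. by move=> i ltiN; rewrite coef_trunc // coefX /fps_X; case: (i == 1)%N. Qed.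

Lemma trunc_opp f : eqN (trunc (fps_opp f)) (- trunc f).
Proof. by move=> i ltiN; rewrite coefN !coef_trunc. Qed.

Lemma trunc_mul f g : eqN (trunc (fps_mul f g)) (trunc f * trunc g).
Proof.
move=> i ltiN; rewrite coef_trunc // coefM; apply: eq_bigr => j _.
have ltjN : (j < N)%N by apply: leq_ltn_trans ltiN; rewrite -ltnS.
by rewrite !coef_trunc //; apply: leq_ltn_trans (leq_subr _ _) ltiN.
Qed.

Lemma trunc_pow f k : eqN (trunc (fps_pow f k)) (trunc f ^+ k).
Proof.
elim: k => [|k IHk]; first exact: trunc_C.
rewrite exprS; exact: eq_modXn_trans (trunc_mul _ _) (eq_modXnM (fun _ _ => erefl) IHk).
Qed.

Lemma trunc_exp s t : eqN (trunc s) ('X * t) ->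
  eqN (trunc (fps_exp s)) (\sum_(k < N) ((k`!)%:R^-1)%:P *: ('X * t) ^+ k).
Proof.
move=> est i ltiN; rewrite coef_trunc // coef_sum /fps_exp.
rewrite (big_ord_widen N (fun k => ((k`!)%:R^-1 : R) *: fps_pow s k i)) //.
rewrite big_mkcond /=; apply: eq_bigr => k _.
rewrite coefZ -mul_polyC -(coef_trunc _ ltiN) (trunc_pow _ _ ltiN) (eq_modXnX k est ltiN).
by rewrite exprMn coefXnM; case: ltnP; rewrite ?mulr0 // mul_polyC.
Qed.

End Truncation.

Lemma coef_geometric_exp (A : comNzRingType) (a : A) (N k m : nat) : (m < N)%N ->
  ((\poly_(i < N) a ^+ i) ^+ k.+1)`_m = 'C(m + k, k)%:R * a ^+ m.
Proof.
elim: k m => [|k IHk] m ltmN; first by rewrite expr1 coef_poly ltmN addn0 bin0 mul1r.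
rewrite exprSr coefM.
under eq_bigr => j _.
  have lejm : (j <= m)%N := ltn_ord j.
  rewrite IHk ?(leq_ltn_trans lejm) // coef_poly (leq_ltn_trans (leq_subr _ _) ltmN).
  rewrite -mulrA -exprD subnKC //.
  over.
by rewrite /= -mulr_suml -natr_sum sum_bin_hockey_stick.
Qed.

Section LaguerreGeneratingFunction.
Variable R : numFieldType.

Lemma denomLE m : denomL R m = if m == 0%N then 1 else if m == 1%N then 'X - 1 else 0.
Proof.
rewrite /denomL /fps_add /fps_mul /fps_C /fps_X big_ord_recr /= subnn /=.
rewrite big1 ?add0r => [|i _]; last by rewrite subn_eq0 leqNgt ltn_ord mulr0.
by case: m => [|[|m]]; rewrite /= ?mul1r ?mul0r ?addr0 ?add0r.
Qed.

Lemma fps_inv_denomL m : fps_inv (denomL R) m = (1 - 'X) ^+ m.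
Proof.
suff seqE : fps_inv_seq (denomL R) m = mkseq (fun i => (1 - 'X) ^+ i) m.+1.
  by rewrite /fps_inv seqE nth_mkseq.
elim: m => [|m IHm] /=; first by rewrite denomLE invr1.
rewrite IHm [in RHS]mkseqS denomLE /= invr1 mulN1r big_ord_recl /= denomLE /= nth_mkseq ?subn0 //.
rewrite big1 ?addr0 => [|i _]; last by rewrite denomLE mul0r.
by rewrite -mulNr opprB -exprS.
Qed.

Lemma trunc_inv_denomL N : trunc N (fps_inv (denomL R)) = \poly_(i < N) (1 - 'X) ^+ i.
Proof. by apply/polyP => i; rewrite !coef_poly fps_inv_denomL. Qed.

Lemma trunc_exponentL N :
  eq_modXn N (trunc N (fps_opp (fps_mul (fps_mul (fps_X R) (fps_C 'X)) (fps_inv (denomL R)))))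
    ('X * ((- 'X)%:P * \poly_(i < N) (1 - 'X) ^+ i)).
Proof.
rewrite polyCN mulNr mulrN mulrA -trunc_inv_denomL.
apply: eq_modXn_trans (trunc_opp _) _; apply: eq_modXnN.
apply: eq_modXn_trans (trunc_mul _ _) _; apply: eq_modXnM => //.
apply: eq_modXn_trans (trunc_mul _ _) _.
by apply: eq_modXnM; [exact: trunc_X | exact: trunc_C].
Qed.

Lemma genL_binomial_form n : genL R n =
  \sum_(k < n.+1) ((k`!)%:R^-1 * 'C(n, k)%:R) *: ((- 'X) ^+ k * (1 - 'X) ^+ (n - k)).
Proof.
have lt_n_Sn : (n < n.+1)%N := ltnSn n.
rewrite /genL -(coef_trunc _ lt_n_Sn) (trunc_mul _ _ lt_n_Sn) trunc_inv_denomL.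
rewrite (eq_modXnM (trunc_exp (@trunc_exponentL n.+1)) (fun _ _ => erefl) lt_n_Sn).
rewrite mulr_suml coef_sum; apply: eq_bigr => k _.
have lekn : (k <= n)%N := ltn_ord k.
rewrite -scalerAl coefZ exprMn -mulrA coefXnM ltnNge lekn /=.
rewrite exprMn -mulrA -exprSr -polyC_exp coefCM coef_geometric_exp ?ltnS ?leq_subr // subnK //.
by rewrite mul_polyC -scalerA scaler_nat mulr_natl mulrnAr.
Qed.

End LaguerreGeneratingFunction.

Lemma QL_binomial_form (R : numFieldType) n : QL R n =
  \sum_(k < n.+1) ((k`!)%:R^-1 * 'C(n, k)%:R) *: ((- 'X) ^+ k * (1 - 'X) ^+ (n - k)).
Proof.
transitivity (\sum_(k < n.+1) \sum_(j < (n - k).+1)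
    ((k`!)%:R^-1 * 'C(n, k)%:R * 'C(n - k, j)%:R) *: (- 'X : {poly R}) ^+ (k + j)).
  rewrite (sum_triangle n (fun k j =>
    ((k`!)%:R^-1 * 'C(n, k)%:R * 'C(n - k, j)%:R) *: (- 'X : {poly R}) ^+ (k + j))) /QL.
  apply: eq_bigr => r _.
  rewrite mulr_sumr scaler_suml; apply: eq_bigr => k _.
  have lekr : (k <= r)%N := ltn_ord k.
  by rewrite subnKC // -mulrA -natrM -bin_trinomial // natrM; congr (_ *: _); ring.
apply: eq_bigr => k _; rewrite addrC exprD1n mulr_sumr scaler_sumr; apply: eq_bigr => j _.
by rewrite exprD -scalerA; congr (_ *: _); rewrite scaler_nat mulrnAr.
Qed.

Theorem theorem6p1 (R : numFieldType) (n : nat) : genL R n = QL R n.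
Proof. by rewrite genL_binomial_form QL_binomial_form. Qed.
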